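(* For every finite simple digraph $G$, ${\sf kw}(G) \leq {\sf circ}(G) + 1$, where ${\sf kw}(G)$ is the Kelly-width of $G$ and ${\sf circ}(G)$ is its circumference.
   Context: All digraphs are finite and simple (no loops, no multiple arcs). The circumference ${\sf circ}(G)$ of a digraph $G$ is the length (number of arcs) of a longest simple directed cycle in $G$; if $G$ is acyclic (a DAG), ${\sf circ}(G)$ is defined to be $1$. For a DAG $T$ and distinct nodes $i,j$, write $i\prec j$ if there is a directed walk in $T$ from $i$ to $j$, and $i\preceq j$ if $i=j$ or $i\prec j$; a root is a node with no incoming arcs, and the children of $i$ are the heads of arcs with tail $i$. Given sets $W_i$ for nodes $i$, let $W_{\succeq j}=\bigcup_{k\succeq j}W_k$. For $W,X\subseteq V(G)$, $X$ guards $W$ if $W\cap X=\emptyset$ and for every arc $(u,v)$ of $G$ with $u\in W$ we have $v\in W\cup X$. A Kelly-decomposition of $G$ is a triple $(T,(W_i)_{i\in V(T)},(X_i)_{i\in V(T)})$ where $T$ is a DAG and all $W_i,X_i\subseteq V(G)$, such that: (1) $(W_i)_i$ is a partition of $V(G)$; (2) for every node $i$, $X_i$ guards $W_{\succeq i}$; (3) for every node $i$, the children of $i$ can be enumerated as $j_1,\dots,j_s$ so that for each $q$, $X_{j_q}\subseteq W_i\cup X_i\cup\bigcup_{p<q}W_{\succeq j_p}$, and the roots of $T$ can be enumerated as $r_1,r_2,\dots$ so that for each $q$, $X_{r_q}\subseteq\bigcup_{p<q}W_{\succeq r_p}$. Its width is $\max_i|W_i\cup X_i|$, and the Kelly-width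 ${\sf kw}(G)$ is the minimum width of a Kelly-decomposition of $G$. *)

From mathcomp Require Import all_boot.
Set Implicit Arguments. Unset Strict Implicit. Unset Printing Implicit Defensive.

(* A finite simple digraph: vertex type V : finType, arc relation e : rel V,
   required irreflexive (no loops); a relation has no multiple arcs. *)

(* Lengths are bounded by #|V|. *)
Definition circ (V : finType) (e : rel V) : nat :=
  maxn 1 (\max_(k < #|V|.+1 | [exists t : k.-tuple V, uniq t && cycle e t]) k).

Definition dprec (I : finType) (a : rel I) (i j : I) : bool :=
  [exists k, a i k && connect a k j].
Definition dpreceq (I : finType) (a : rel I) (i j : I) : bool :=
  (i == j) || dprec a i j.

Definition is_dag (I : finType) (a : rel I) : Prop := forall i, ~~ dprec a i i.

Definition Wsucc (V I : finType) (a : rel I) (W : I -> {set V}) (j : I) : {set V} :=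
  \bigcup_(k | dpreceq a j k) W k.

Definition guards (V : finType) (e : rel V) (Wset X : {set V}) : Prop :=
  [disjoint Wset & X] /\
  forall u v, e u v -> u \in Wset -> v \in Wset :|: X.

Definition enumerates (I : finType) (s : seq I) (P : pred I) : Prop :=
  uniq s /\ forall j, (j \in s) = P j.

Definition is_root (I : finType) (a : rel I) (j : I) : bool := [forall k, ~~ a k j].

Definition KellyDecomposition (V : finType) (e : rel V)
    (I : finType) (a : rel I) (W X : I -> {set V}) : Prop :=
  [/\ is_dag a,
      (forall v, exists i, v \in W i) /\
      (forall i j v, v \in W i -> v \in W j -> i = j),
      (forall i, guards e (Wsucc a W i) (X i)),
      (forall i, exists s : seq I, enumerates s (a i) /\
         forall s1 j s2, s = s1 ++ j :: s2 ->
           X j \subset W i :|: X i :|: \bigcup_(p <- s1) Wsucc a W p)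
    &
      (exists s : seq I, enumerates s (is_root a) /\
         forall s1 j s2, s = s1 ++ j :: s2 ->
           X j \subset \bigcup_(p <- s1) Wsucc a W p)].

Definition decomp_width (V I : finType) (W X : I -> {set V}) : nat :=
  \max_(i : I) #|W i :|: X i|.

(* kw(G) <= k  iff some Kelly-decomposition of G has width <= k
   (kw is the minimum width over all Kelly-decompositions). *)
Definition kw_le (V : finType) (e : rel V) (k : nat) : Prop :=
  exists (I : finType) (a : rel I) (W X : I -> {set V}),
    KellyDecomposition e a W X /\ decomp_width W X <= k.

From mathcomp Require Import all_boot zify.
Set Implicit Arguments. Unset Strict Implicit. Unset Printing Implicit Defensive.

(* Order the vertices as a depth-first search finishes them, so that a vertex
   comes after every vertex discovered from it.  Every vertex v is a node with
   bag {v}; it guards the set of vertices reachable from v through vertices not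
   later than v, and its guard is the set of later out-neighbours of that set.
   The children of v are the earlier vertices of its guarded set, and children
   and roots are listed latest first.

   The guard of v lies on the tree path of the search from its root to v.  If x
   is the guard vertex closest to the root, then v reaches x through vertices
   not later than v and x reaches v along the tree path: this is a simple cycle
   through v and the whole guard, so the guard has at most circ(G) vertices. *)

Lemma connect_preserve (T : finType) (r : rel T) (P : T -> Prop) :
  (forall y z, P y -> r y z -> P z) -> forall x y, P x -> connect r x y -> P y.
Proof.
move=> rP x y Px /connectP [p rp ->].
by elim: p x Px rp => //= z p IHp x Px /andP[rxz /IHp]; apply; apply: rP rxz.
Qed.

Lemma size_cycle_le_circ (V : finType) (e : rel V) (c : seq V) :
  uniq c -> cycle e c -> size c <= circ e.
Proof.
move=> uc cc; rewrite /circ; apply: leq_trans (leq_maxr _ _).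
have lt_c : size c < #|V|.+1 by rewrite ltnS -(card_uniqP uc) max_card.
apply: (leq_bigmax_cond (Ordinal lt_c)).
by apply/existsP; exists (in_tuple c); rewrite /= uc cc.
Qed.

Section OrderedReach.
Variables (V : finType) (e : rel V).
Implicit Types (s p q L : seq V) (A U R : {set V}) (r v w x y z : V).

Definition below s v : rel V := [rel y z | e y z && (index z s <= index v s)].

Definition reach s v : {set V} := [set w | connect (below s v) v w].

Definition exits s v : {set V} :=
  [set x in s | (index v s < index x s) && [exists w in reach s v, e w x]].

Lemma reach_refl s v : v \in reach s v.
Proof. by rewrite inE connect0. Qed.

Lemma reach_step s v w x :
  w \in reach s v -> e w x -> index x s <= index v s -> x \in reach s v.
Proof.
by rewrite !inE => vw wx xv; apply: connect_trans vw (connect1 _); apply/andP.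
Qed.

Lemma reach_index s v w : w \in reach s v -> index w s <= index v s.
Proof.
rewrite inE; apply: (connect_preserve (P := fun w => index w s <= index v s)) => //.
by move=> y z _ /andP[].
Qed.

Lemma mem_index_le s v w : v \in s -> index w s <= index v s -> w \in s.
Proof. by move=> vs wv; rewrite -index_mem (leq_ltn_trans wv) ?index_mem. Qed.

Lemma reach_mem s v w : v \in s -> w \in reach s v -> w \in s.
Proof. by move=> vs /reach_index; apply: mem_index_le. Qed.

Lemma reach_trans s v w z : w \in reach s v -> z \in reach s w -> z \in reach s v.
Proof.
move=> vw; have wv := reach_index vw; rewrite [z \in _]inE.
apply: (connect_preserve (P := fun t => t \in reach s v)) vw => y t ry /andP[yt tw].
exact: reach_step ry yt (leq_trans tw wv).
Qed.

Lemma below_catl p q v : v \in p -> below (p ++ q) v =2 below p v.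
Proof.
move=> vp y z; rewrite /below /= !index_cat vp; congr (_ && _).
case: ifP => // /negbT zp; rewrite -index_mem in vp.
by rewrite (memNindex zp); apply/idP/idP => h; lia.
Qed.

Lemma reach_catl p q v : v \in p -> reach (p ++ q) v = reach p v.
Proof. by move=> vp; apply/setP => w; rewrite !inE (eq_connect (below_catl q vp)). Qed.

Lemma exits_catl p q v x :
  v \in p -> x \in p -> x \in exits (p ++ q) v -> x \in exits p v.
Proof.
by move=> vp xp; rewrite !inE !index_cat vp xp reach_catl // => /and3P[_ -> ->].
Qed.

(* [L] is the tree path of the search from its start in [A] down to [v]. *)
Definition exit_path s A v := exists L,
  [/\ head v L \in A, sorted e (rcons L v), uniq L,
      {in L, forall y, (y \in s) && (index v s < index y s)}
    & {subset exits s v <= L}].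

Lemma card_exits_le_circ s A v : exit_path s A v -> #|exits s v| <= circ e.
Proof.
case=> L [_ + uniq_L later_L exits_L]; set X := exits s v.
have [hasX | /hasPn noX] := boolP (has (mem X) L); last first.
  suff -> : X = set0 by rewrite cards0.
  apply/setP => x; rewrite in_set0; apply/negbTE/negP => xX.
  by have := noX x (exits_L x xX); rewrite /= xX.
case/split_find: hasX uniq_L later_L exits_L => x L1 L2 xX /hasPn L1X.
rewrite cat_rcons => uniq_L later_L exits_L sorted_L.
have X_sub : {subset X <= x :: L2}.
  move=> y yX; move: (exits_L y yX); rewrite mem_cat => /orP[yL1|//].
  by have := L1X y yL1; rewrite /= yX.
have path_L2 : path e x (rcons L2 v).
  by move: sorted_L; rewrite rcons_cat sorted_cat_cons => /andP[].
have later_L2 z : z \in x :: L2 -> index v s < index z s.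
  move=> zL; have zL' : z \in L1 ++ x :: L2 by rewrite mem_cat zL orbT.
  by have /andP[] := later_L _ zL'.
have uniq_L2 : uniq (x :: L2) by move: uniq_L; rewrite cat_uniq => /and3P[].
have : x \in exits s v := xX; rewrite inE => /and3P[_ _ /existsP[w /andP[]]].
rewrite inE => /connectP[p0 path_p0 ->] ex.
case: (shortenP path_p0) => p path_p uniq_p _ in ex *.
have early_p z : z \in v :: p -> index z s <= index v s.
  by move=> /(path_connect path_p) vz; apply: reach_index; rewrite inE.
pose c := v :: p ++ x :: L2.
have uniq_c : uniq c.
  rewrite /c -cat_cons cat_uniq uniq_p uniq_L2 andbT.
  apply/hasPn => z /later_L2 vz; apply/negP => /early_p.
  by rewrite leqNgt vz.
have cycle_c : cycle e c.
  rewrite /c /= rcons_cat rcons_cons cat_path /= ex path_L2 andbT.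
  by rewrite andbT; apply: sub_path path_p => y z /andP[].
apply: leq_trans (size_cycle_le_circ uniq_c cycle_c).
have card_X : #|X| <= #|x :: L2| by apply/subset_leq_card/subsetP.
apply: leq_trans card_X (leq_trans (card_size _) _).
by rewrite /c /= size_cat /=; lia.
Qed.

Definition within U : rel V := [rel x y | e x y && (y \in U)].

Lemma connect_within_mem U x y : x \in U -> connect (within U) x y -> y \in U.
Proof. by apply: (connect_preserve (P := fun y => y \in U)) => a b _ /andP[]. Qed.

Definition reached_from U A :=
  forall v, v \in U -> exists2 a, a \in A :&: U & connect (within U) a v.

Lemma reached_from_succ U r :
  reached_from ([set y | connect (within U) r y] :\ r) [set y | e r y].
Proof.
set R := [set y | _]; move=> v; rewrite in_setD1 inE => /andP[vr rv].
pose P w := w \in R /\ (w = r \/ exists2 b, b \in [set y | e r y] :&: (R :\ r)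
                                  & connect (within (R :\ r)) b w).
have [_ [/eqP|//]] : P v; last by rewrite (negbTE vr).
apply: connect_preserve rv; last by split; [rewrite inE connect0 | left].
move=> y z [yR ry] /andP[yz zU].
have zR : z \in R.
  by move: yR; rewrite !inE => /connect_trans; apply; exact/connect1/andP.
split=> //; have [-> | zr] := eqVneq z r; [by left | right].
have zR' : z \in R :\ r by rewrite in_setD1 zr.
case: ry => [yr | [b bA bz]].
  by exists z; rewrite ?connect0 // in_setI zR' andbT inE -yr.
by exists b => //; apply: connect_trans bz _; apply/connect1/andP.
Qed.

Lemma reached_from_setD U A R :
  (forall y z, y \in R -> z \in U -> e y z -> z \in R) ->
  reached_from U A -> reached_from (U :\: R) A.
Proof.
move=> R_closed reachedU v /setDP[vU vR].
have [a /setIP[aA aU] av] := reachedU v vU.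
have aR : a \notin R.
  apply: contra vR => aR.
  apply: (connect_preserve (P := fun w => w \in R)) av => // y z yR /andP[yz zU].
  exact: R_closed yR zU yz.
pose P w := w \in R \/ connect (within (U :\: R)) a w.
have : P v.
  apply: (connect_preserve (P := P)) av; last by right.
  move=> y z [yR | ay] /andP[yz zU]; first by left; apply: R_closed yR zU yz.
  have [zR | zR] := boolP (z \in R); [by left | right].
  apply: connect_trans ay (connect1 _).
  by apply/andP; rewrite inE zR.
case=> [vR' | av']; first by rewrite vR' in vR.
by exists a; rewrite // !inE aA aR.
Qed.

Section DfsStep.
Variables (U A : {set V}) (r : V) (s1 s2 : seq V).
Let R := [set y | connect (within U) r y].
Hypotheses (rU : r \in U) (rA : r \in A).
Hypotheses (s1E : s1 =i R :\ r) (s2E : s2 =i U :\: R).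
Let s := s1 ++ r :: s2.

Lemma mem_dfs_cat : s =i U.
Proof.
move=> x; rewrite mem_cat inE s1E s2E !inE.
have [->|_] := eqVneq x r; first by rewrite rU orbT.
have [xR|_] /= := boolP (connect _ r x); last by [].
by rewrite (connect_within_mem rU xR).
Qed.

Lemma within_closed y z : y \in R -> z \in U -> e y z -> z \in R.
Proof. by rewrite !inE => ry zU yz; apply: connect_trans ry (connect1 _); apply/andP. Qed.

Lemma r_notin_s1 : r \notin s1.
Proof. by rewrite s1E !inE eqxx. Qed.

Lemma index_s1 y : y \in s1 -> index y s = index y s1.
Proof. by move=> ys1; rewrite index_cat ys1. Qed.

Lemma index_r : index r s = size s1.
Proof. by rewrite index_cat (negbTE r_notin_s1) /= eqxx addn0. Qed.

Lemma index_s2 y : y \in s2 -> index y s = size s1 + (index y s2).+1.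
Proof.
rewrite s2E => yU; have [_ yR] := setDP yU.
have ys1 : y \notin s1 by rewrite s1E in_setD1 (negbTE yR) andbF.
have yr : r != y by apply: contraNneq yR => <-; rewrite inE connect0.
by rewrite index_cat (negbTE ys1) /= (negbTE yr) addnS.
Qed.

Lemma mem_R_notin_s2 z : z \in s -> z \notin s2 -> z \in R.
Proof.
move=> + zs2; rewrite mem_cat inE => /or3P[| /eqP-> | zs2']; last 2 first.
- by rewrite inE connect0.
- by rewrite zs2' in zs2.
by rewrite s1E => /setD1P[].
Qed.

Lemma mem_s2_index_gt z : z \in s -> size s1 < index z s -> z \in s2.
Proof.
rewrite mem_cat inE => /or3P[zs1 | /eqP-> | //]; last by rewrite index_r ltnn.
by rewrite index_s1 // ltnNge ltnW // index_mem.
Qed.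

Lemma notin_s2_index_le z : index z s <= size s1 -> z \notin s2.
Proof. by move=> zle; apply/negP => /index_s2 zidx; lia. Qed.

Lemma exit_path_s1 v : v \in s1 -> exit_path s1 [set y | e r y] v -> exit_path s A v.
Proof.
move=> vs1 [L [hL sL uL later_L exits_L]]; exists (r :: L); split => //.
- by case: (L) hL sL => [|y L'] /=; rewrite inE => ->.
- by rewrite /= uL andbT; apply: contra r_notin_s1 => /later_L /andP[].
- have vr : index v s < index r s by rewrite index_r index_s1 // index_mem.
  move=> y; rewrite inE => /predU1P[-> | /later_L /andP[ys1 vy]].
    by rewrite vr mem_cat mem_head orbT.
  by rewrite mem_cat ys1 !index_s1.
move=> x xX; move: (xX); rewrite inE => /and3P[xs _ /existsP[w /andP[vw wx]]].
have ws1 : w \in s1 by rewrite reach_catl // in vw; apply: reach_mem vw.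
have xR : x \in R.
  by apply: within_closed wx; [rewrite s1E in ws1; case/setD1P: ws1 | rewrite -mem_dfs_cat].
move: xs; rewrite mem_cat inE => /or3P[xs1 | /eqP-> | xs2].
- by rewrite inE exits_L ?orbT // (exits_catl vs1 xs1 xX).
- exact: mem_head.
- by move: xs2; rewrite s2E inE xR.
Qed.

Lemma exit_path_r : exit_path s A r.
Proof.
exists [::]; split=> // x; rewrite inE => /and3P[xs rx /existsP[w /andP[rw wx]]].
have rs : r \in s by rewrite mem_cat mem_head orbT.
have wR : w \in R.
  apply: mem_R_notin_s2 (reach_mem rs rw) _.
  by apply: notin_s2_index_le; rewrite -index_r reach_index.
have := mem_s2_index_gt xs; rewrite -index_r => /(_ rx).
by rewrite s2E inE (within_closed wR _ wx) // -mem_dfs_cat.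
Qed.

Lemma exit_path_s2 v : v \in s2 -> exit_path s2 A v -> exit_path s A v.
Proof.
move=> vs2 [L [hL sL uL later_L exits_L]]; exists L; split => //.
  move=> y /later_L /andP[ys2 vy].
  by rewrite mem_cat inE ys2 !orbT !index_s2 // ltn_add2l ltnS.
have vs : v \in s by rewrite mem_cat inE vs2 !orbT.
move=> x; rewrite inE => /and3P[xs vx /existsP[w /andP[vw wx]]].
have xs2 : x \in s2.
  by apply: mem_s2_index_gt xs (leq_trans _ vx); rewrite index_s2 // ltnS leq_addr.
have xR : x \notin R by move: xs2; rewrite s2E => /setDP[].
pose P y := y \in R \/ y \in reach s2 v.
have : P w.
  rewrite inE in vw; apply: (connect_preserve (P := P)) vw; last by right; apply: reach_refl.
  move=> y z Py /andP[yz zv]; have zs := mem_index_le vs zv.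
  have [zs2 | zs2] := boolP (z \in s2); last by left; apply: mem_R_notin_s2.
  case: Py => [yR | vy]; first by left; apply: within_closed yR _ yz; rewrite -mem_dfs_cat.
  by right; apply: reach_step vy yz _; rewrite !index_s2 // leq_add2l ltnS in zv.
case=> [wR | vw2]; first by move: xR; rewrite (within_closed wR _ wx) // -mem_dfs_cat.
have vx2 : index v s2 < index x s2 by move: vx; rewrite !index_s2 // ltn_add2l ltnS.
by apply: exits_L; rewrite inE xs2 vx2; apply/existsP; exists w; rewrite vw2.
Qed.

End DfsStep.

Lemma dfs_order n U A : #|U| <= n -> reached_from U A ->
  exists2 s : seq V, s =i U & forall v, v \in s -> exit_path s A v.
Proof.
elim: n U A => [|n IHn] U A leUn reachedU.
  by exists [::] => // x; move: leUn; rewrite leqn0 => /eqP/cards0_eq->; rewrite inE.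
have [-> | [v0 v0U]] := set_0Vmem U; first by exists [::] => // x; rewrite inE.
have [r /setIP[rA rU] _] := reachedU v0 v0U.
set R := [set y | connect (within U) r y].
have rR : r \in R by rewrite inE connect0.
have leUr : #|U :\ r| <= n by rewrite (cardsD1 r U) rU in leUn.
have RU : R \subset U by apply/subsetP => y; rewrite inE; apply: connect_within_mem.
have [s1 s1E paths1] := IHn (R :\ r) [set y | e r y]
  (leq_trans (subset_leq_card (setSD _ RU)) leUr) (reached_from_succ (U := U) (r := r)).
have leU2 : #|U :\: R| <= n.
  by apply: leq_trans leUr; apply/subset_leq_card/setDS; rewrite sub1set.
have [s2 s2E paths2] := IHn _ A leU2 (reached_from_setD (@within_closed U r) reachedU).
exists (s1 ++ r :: s2); first exact: mem_dfs_cat rU s1E s2E.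
move=> v; rewrite mem_cat inE => /or3P[vs1 | /eqP-> | vs2].
- exact (exit_path_s1 rU rA s1E s2E vs1 (paths1 v vs1)).
- exact (exit_path_r rU rA s1E s2E).
- exact (exit_path_s2 rU s1E s2E vs2 (paths2 v vs2)).
Qed.

End OrderedReach.

Section KellyFromOrder.
Variables (V : finType) (e : rel V) (s : seq V).
Hypothesis s_total : forall v, v \in s.
Implicit Types (t : seq V) (i j k u v w x y z : V).

Definition reach_arc : rel V :=
  [rel v w | (index w s < index v s) && (w \in reach e s v)].

Lemma index_inj : injective (index^~ s).
Proof. by move=> x y eq_xy; rewrite -(nth_index x (s_total x)) eq_xy nth_index. Qed.

Lemma reach_arc_dag : is_dag reach_arc.
Proof.
move=> i; apply/negP => /existsP[k /andP[/andP[ki _] ki']].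
have : index i s <= index k s.
  apply: (connect_preserve (P := fun z => index z s <= index k s)) ki' => // y z yk.
  by case/andP => zy _; apply: leq_trans (ltnW zy) yk.
by rewrite leqNgt ki.
Qed.

Lemma dpreceq_reach_arc v w : dpreceq reach_arc v w = (w \in reach e s v).
Proof.
apply/idP/idP => [/predU1P[<- | /existsP[k /andP[/andP[_ vk] kw]]] | vw].
- exact: reach_refl.
- apply: (connect_preserve (P := fun z => z \in reach e s v)) kw => // y z vy.
  by case/andP => _; apply: reach_trans vy.
have [-> | wv] := eqVneq w v; first by rewrite /dpreceq eqxx.
apply/orP; right; apply/existsP; exists w.
rewrite connect0 andbT; apply/andP; split=> //.
by rewrite ltn_neqAle (reach_index vw) andbT; apply: contra wv => /eqP/index_inj->.
Qed.

Lemma Wsucc_reach_arc v : Wsucc reach_arc set1 v = reach e s v.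
Proof.
apply/setP => w; rewrite -dpreceq_reach_arc; apply/bigcupP/idP => [[k vk] | vw].
  by rewrite inE => /eqP->.
by exists w; rewrite ?inE.
Qed.

Lemma guards_reach_exits v : guards e (reach e s v) (exits e s v).
Proof.
split=> [|u x ux vu].
  rewrite disjoints_subset; apply/subsetP => x /reach_index xv.
  by rewrite !inE ltnNge xv /= andbF.
rewrite in_setU; have [xv | vx] := leqP (index x s) (index v s).
  by rewrite (reach_step vu ux xv).
by apply/orP; right; rewrite inE s_total vx; apply/existsP; exists u; rewrite vu.
Qed.

Definition by_index_desc (P : pred V) : seq V :=
  sort (fun x y => index y s <= index x s) (filter P (enum V)).

Lemma enumerates_by_index_desc P : enumerates (by_index_desc P) P.
Proof.
split; first by rewrite sort_uniq filter_uniq ?enum_uniq.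
by move=> j; rewrite mem_sort mem_filter mem_enum andbT.
Qed.

Lemma by_index_desc_prefix P t1 j t2 x :
  by_index_desc P = t1 ++ j :: t2 -> P x -> index j s < index x s -> x \in t1.
Proof.
move=> sortE Px jx.
have := sort_sorted (fun x y => leq_total (index y s) (index x s)) (filter P (enum V)).
rewrite -/(by_index_desc P) sortE sorted_cat_cons => /andP[_].
move/(order_path_min (fun x y z xy yz => leq_trans yz xy))/allP => j_max.
have : x \in t1 ++ j :: t2 by rewrite -sortE mem_sort mem_filter Px mem_enum.
rewrite mem_cat inE => /or3P[// | /eqP xj | /j_max]; first by rewrite xj ltnn in jx.
by rewrite leqNgt jx.
Qed.

Lemma exits_child i t1 j t2 :
  by_index_desc (reach_arc i) = t1 ++ j :: t2 ->
  exits e s j \subset [set i] :|: exits e s i :|: \bigcup_(p <- t1) Wsucc reach_arc set1 p.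
Proof.
move=> sortE.
have : j \in by_index_desc (reach_arc i) by rewrite sortE mem_cat mem_head orbT.
rewrite mem_sort mem_filter mem_enum andbT => /andP[_ ij].
apply/subsetP => x; rewrite inE => /and3P[_ jx /existsP[w /andP[jw wx]]].
have iw := reach_trans ij jw.
rewrite !in_setU; have [xi | ix] := leqP (index x s) (index i s); last first.
  by rewrite [x \in exits _ _ _]inE s_total ix; apply/orP; left; apply/orP; right;
     apply/existsP; exists w; rewrite iw.
have [-> | x_ne_i] := eqVneq x i; first by rewrite inE eqxx.
have ix : reach_arc i x.
  apply/andP; split; last exact: reach_step iw wx xi.
  by rewrite ltn_neqAle xi andbT; apply: contra x_ne_i => /eqP/index_inj->.
apply/orP; right; rewrite bigcup_seq; apply/bigcupP; exists x.
  exact: by_index_desc_prefix sortE ix jx.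
by rewrite Wsucc_reach_arc reach_refl.
Qed.

Lemma exits_root t1 j t2 :
  by_index_desc (is_root reach_arc) = t1 ++ j :: t2 ->
  exits e s j \subset \bigcup_(p <- t1) Wsucc reach_arc set1 p.
Proof.
move=> sortE; apply/subsetP => x; rewrite inE => /and3P[_ jx _].
have [m mx m_max] :=
  @arg_maxnP V x (fun m => x \in reach e s m) (index^~ s) (reach_refl _ _ _).
have root_m : is_root reach_arc m.
  apply/forallP => k; apply/negP => /andP[mk km].
  by have := m_max k (reach_trans km mx); rewrite /= leqNgt mk.
rewrite bigcup_seq; apply/bigcupP; exists m; last by rewrite Wsucc_reach_arc.
exact: by_index_desc_prefix sortE root_m (leq_trans jx (reach_index mx)).
Qed.

Lemma kelly_decomposition_of_order :
  KellyDecomposition e reach_arc set1 (exits e s).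
Proof.
split.
- exact: reach_arc_dag.
- by split=> [v | i j v]; [exists v; rewrite inE | rewrite !inE => /eqP-> /eqP->].
- by move=> i; rewrite Wsucc_reach_arc; apply: guards_reach_exits.
- move=> i; exists (by_index_desc (reach_arc i)).
  by split=> [|t1 j t2]; [apply: enumerates_by_index_desc | apply: exits_child].
exists (by_index_desc (is_root reach_arc)).
by split=> [|t1 j t2]; [apply: enumerates_by_index_desc | apply: exits_root].
Qed.

Lemma kw_le_of_order n : (forall v, #|exits e s v| <= n) -> kw_le e n.+1.
Proof.
move=> le_exits; exists V, reach_arc, set1, (exits e s).
split; first exact: kelly_decomposition_of_order.
apply/bigmax_leqP => i _; rewrite cardsU1 addnC.
by rewrite -addn1 leq_add ?leq_b1.
Qed.

End KellyFromOrder.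

Theorem mainTheorem3 (V : finType) (e : rel V) (e_irr : irreflexive e) :
  kw_le e (circ e + 1).
Proof.
have reachedV : reached_from e setT setT.
  by move=> v _; exists v; rewrite ?inE ?connect0.
have [s sV paths] := dfs_order (max_card _) reachedV.
have s_total v : v \in s by rewrite sV inE.
rewrite addn1; apply: (kw_le_of_order s_total) => v.
exact: card_exits_le_circ (paths v (s_total v)).
Qed.
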